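(* Up to equivalence, the first order Reed--Muller code $RM(1,5)$ is the unique binary $[32,6]$ linear code $B$ such that (i) $B$ is doubly even, (ii) $B$ contains the all-ones vector, and (iii) $B^\perp$ has minimum weight at least $4$.
   Context: A binary code is doubly even if all codeword weights are divisible by $4$. Two binary codes are equivalent if one is obtained from the other by a coordinate permutation. $RM(1,5)$ is the binary $[32,6]$ code generated by the all-ones vector and the five vectors of length $32$ given by the coordinate functions of $\mathbb{F}_2^5$; equivalently it has generator matrix with rows $1^{32}$, $1^{16}0^{16}$, $(1^80^8)^2$, $(1^40^4)^4$, $(1^20^2)^8$, $(10)^{16}$. Its weight enumerator is $1+62y^{16}+y^{32}$. *)

From HB Require Import structures.
From mathcomp Require Import all_boot all_order all_algebra all_fingroup.
Set Implicit Arguments. Unset Strict Implicit. Unset Printing Implicit Defensive.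
Import GRing.Theory.
Local Open Scope ring_scope.

Definition code (n : nat) := {vspace 'rV['F_2]_n}.

Definition wt n (v : 'rV['F_2]_n) : nat := #|[set i | v ord0 i != 0]|.

Definition dotv n (u v : 'rV['F_2]_n) : 'F_2 := \sum_i u ord0 i * v ord0 i.

Definition doubly_even n (B : code n) : Prop :=
  forall v, v \in B -> (4 %| wt v)%N.

Definition all_ones n : 'rV['F_2]_n := \row_(i < n) 1.

Definition in_dual n (B : code n) (u : 'rV['F_2]_n) : Prop :=
  forall c, c \in B -> dotv u c = 0.

Definition dual_min_wt_ge n (B : code n) (d : nat) : Prop :=
  forall u, in_dual B u -> u != 0 -> (d <= wt u)%N.

Definition code_equiv n (B1 B2 : code n) : Prop :=
  exists s : 'S_n, forall v, (v \in B2) = (col_perm s v \in B1).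

(* coordinate function k of F_2^5 (row with 1 at j when bit k of j is 0),
   giving rows (10)^16, (1^2 0^2)^8, ..., 1^16 0^16 for k = 0..4 *)
Definition coord_row (k : nat) : 'rV['F_2]_32 :=
  \row_(j < 32) (~~ odd (j %/ 2 ^ k))%:R.

Definition RM15 : code 32 :=
  <<[:: all_ones 32; coord_row 4; coord_row 3; coord_row 2; coord_row 1;
        coord_row 0]>>%VS.

From HB Require Import structures.
From mathcomp Require Import all_boot all_order all_algebra all_fingroup.
Set Implicit Arguments. Unset Strict Implicit. Unset Printing Implicit Defensive.
Import GRing.Theory.
Local Open Scope ring_scope.

(* The 32 coordinates of RM(1,5) are the points of F_2^5: coordinate j is the
   point whose k-th bit is bit k of j, and coord_row k is the complement of the
   k-th bit function.
   - Properties of RM(1,5): its dimension and double evenness are finite checks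
     over the 2^6 combinations of its generators; for the dual distance, a dual
     vector has even weight (the all-ones word is a codeword), and it cannot
     have weight 2, since a weight-2 dual vector supported on {i, j} exists
     exactly when every codeword agrees on coordinates i and j, while the
     coordinate rows separate distinct points of F_2^5.
   - Uniqueness: write B = <<1, b_0, ..., b_4>> and label coordinate j by the
     point (b_0 j, ..., b_4 j) of F_2^5.  Two coordinates with the same label
     agree on all of B, so dual distance >= 3 makes the labelling a bijection;
     relabelling coordinates along it maps each b_k to 1 + coord_row k, hence
     maps B into RM(1,5), and equality follows by comparing dimensions. *)

Lemma pchar_F2 : (2 \in [pchar 'F_2])%N. Proof. exact: pchar_Fp. Qed.

Lemma F2_of_bool (x : 'F_2) : x = (x != 0)%:R.
Proof. by case: x => [[|[|]] //] ?; apply: val_inj. Qed.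

Lemma F2_natr n : n%:R = (odd n)%:R :> 'F_2.
Proof. by rewrite -modn2 (Fp_nat_mod (isT : prime 2)). Qed.

Lemma F2_addb (b1 b2 : bool) : (b1 (+) b2)%:R = b1%:R + b2%:R :> 'F_2.
Proof. by case: b1; case: b2; rewrite ?addr0 ?add0r ?(addrr_pchar2 pchar_F2). Qed.

Lemma F2_andb (b1 b2 : bool) : (b1 && b2)%:R = b1%:R * b2%:R :> 'F_2.
Proof. by case: b1; case: b2; rewrite ?mul1r ?mul0r. Qed.

Lemma F2_natr_neq0 (b : bool) : (b%:R != 0 :> 'F_2) = b.
Proof. by case: b; rewrite ?eqxx ?oner_eq0. Qed.

Lemma F2_eq_natr (b1 b2 : bool) : (b1%:R == b2%:R :> 'F_2) = (b1 == b2).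
Proof. by case: b1; case: b2; rewrite ?eqxx // eq_sym oner_eq0. Qed.

Lemma F2_negb (x : 'F_2) : (~~ (x != 0))%:R = 1 + x.
Proof. by rewrite {2}[x]F2_of_bool; case: (x != 0); rewrite /= ?addr0 ?(addrr_pchar2 pchar_F2). Qed.

Lemma span_cons_basis (K : fieldType) (vT : vectType K) (U : {vspace vT}) v :
  v \in U -> v != 0 -> exists bs : seq vT, size bs = (\dim U).-1 /\ U = <<v :: bs>>%VS.
Proof.
move=> vU v_neq0; set C := (U :\: <[v]>)%VS.
have UE : (<[v]> + C)%VS = U by rewrite addvC addv_diff; apply/addv_idPl; rewrite -memvE.
exists (vbasis C); split.
  by rewrite size_tuple -UE dimv_disjoint_sum ?dim_vline ?v_neq0 // capvC capv_diff.
by rewrite span_cons (span_basis (vbasisP C)).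
Qed.

Lemma span_agree (F : fieldType) n (X : seq 'rV[F]_n) (i j : 'I_n) :
  (forall x, x \in X -> x 0 i = x 0 j) -> forall c, c \in <<X>>%VS -> c 0 i = c 0 j.
Proof.
move=> agreeX c /(coord_span (X := in_tuple X)) ->.
by rewrite !summxE; apply: eq_bigr => l _; rewrite !mxE agreeX // mem_nth.
Qed.

Lemma card_ord_count n (P : pred nat) : #|[pred j : 'I_n | P j]| = count P (iota 0 n).
Proof. by rewrite -val_enum_ord count_map -size_filter cardE enumT. Qed.

Lemma wt_eq0 n (u : 'rV['F_2]_n) : (wt u == 0%N) = (u == 0).
Proof.
rewrite /wt cards_eq0; apply/eqP/eqP => [S0 | ->].
  apply/matrixP => i j; rewrite [i]ord1 mxE; apply/eqP/negPn/negP => uj.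
  by move: (in_set0 j); rewrite -S0 inE uj.
by apply/setP => j; rewrite !inE mxE eqxx.
Qed.

Lemma dotv_supp n (u c : 'rV['F_2]_n) : dotv u c = \sum_(i | u 0 i != 0) c 0 i.
Proof.
rewrite /dotv (bigID (fun i => u 0 i != 0)) /= [X in _ + X]big1 ?addr0.
  by apply: eq_bigr => i ui; rewrite [u 0 i]F2_of_bool ui mul1r.
by move=> i /negPn/eqP ->; rewrite mul0r.
Qed.

Lemma dotv_all_ones n (u : 'rV['F_2]_n) : dotv u (all_ones n) = (odd (wt u))%:R.
Proof.
rewrite dotv_supp (eq_bigr (fun=> 1)) => [|i _]; last by rewrite mxE.
by rewrite sumr_const -F2_natr /wt; congr (_%:R); apply: eq_card => i; rewrite inE.
Qed.

Definition pair_vec n (i j : 'I_n) : 'rV['F_2]_n := \row_l ((l == i)%:R + (l == j)%:R).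

Lemma dotv_pair n (i j : 'I_n) (c : 'rV['F_2]_n) : dotv (pair_vec i j) c = c 0 i + c 0 j.
Proof.
rewrite /dotv; under eq_bigr => l _ do rewrite mxE mulrDl.
rewrite big_split /= (bigD1 i) //= [X in _ + X](bigD1 j) //= !eqxx !mul1r.
by rewrite !big1 ?addr0 // => l /negbTE ->; rewrite mul0r.
Qed.

Lemma pair_vec_supp n (i j : 'I_n) : i != j ->
  [set l | pair_vec i j 0 l != 0] = [set i; j].
Proof.
move=> ij; apply/setP => l; rewrite !inE mxE.
have [->|_] := eqVneq l i; first by rewrite (negbTE ij) addr0 oner_eq0.
by rewrite add0r F2_natr_neq0.
Qed.

Lemma wt2_pair n (u : 'rV['F_2]_n) : wt u = 2 -> exists i j, i != j /\ u = pair_vec i j.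
Proof.
move/eqP/cards2P => [i [j [ij suppE]]]; exists i, j; split=> //.
apply/matrixP => a l; rewrite [a]ord1 [LHS]F2_of_bool [RHS]F2_of_bool.
have := congr1 (fun A : {set 'I_n} => l \in A) suppE; rewrite -(pair_vec_supp ij) !inE.
by move=> ->.
Qed.

Lemma in_dual_pair n (B : code n) (i j : 'I_n) :
  in_dual B (pair_vec i j) <-> (forall c, c \in B -> c 0 i = c 0 j).
Proof.
have dotE c : (dotv (pair_vec i j) c = 0) <-> (c 0 i = c 0 j).
  by rewrite dotv_pair -(GRing.subr_pchar2 pchar_F2); split=> [/subr0_eq|->] //; exact: subrr.
by split=> H c /H /dotE.
Qed.

(* A code containing the all-ones word whose codewords separate coordinates
   has dual distance at least 4: dual words are even and not of weight 2. *)
Lemma dual_min_wt4 n (B : code n) : all_ones n \in B ->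
  (forall i j : 'I_n, i != j -> exists2 c, c \in B & c 0 i != c 0 j) ->
  dual_min_wt_ge B 4.
Proof.
move=> onesB sepB u u_dual u_neq0.
have u_even : ~~ odd (wt u).
  apply/negP => odd_wt; move: (u_dual _ onesB).
  by rewrite dotv_all_ones odd_wt => /eqP; rewrite oner_eq0.
have wt_neq0 : wt u != 0%N by rewrite wt_eq0.
have wt_neq2 : wt u != 2%N.
  apply/eqP => /wt2_pair [i [j [ij uE]]]; have [c cB] := sepB i j ij; apply/negP/negPn/eqP.
  by apply: (in_dual_pair B i j).1 cB; rewrite -uE.
by move: u_even wt_neq0 wt_neq2; case: (wt u) => [|[|[|[|]]]].
Qed.

Lemma dual_min_wt_agree n (B : code n) d (i j : 'I_n) : dual_min_wt_ge B d -> (2 < d)%N ->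
  (forall c, c \in B -> c 0 i = c 0 j) -> i = j.
Proof.
move=> dualB d_gt2 agree; apply/eqP/negPn/negP => ij.
have pair_neq0 : pair_vec i j != 0 by rewrite -wt_eq0 /wt pair_vec_supp // cards2 ij.
have := dualB _ ((in_dual_pair B i j).2 agree) pair_neq0.
by rewrite /wt pair_vec_supp // cards2 ij leqNgt d_gt2.
Qed.

Lemma code_equiv_perm n (C : code n) (X : seq 'rV['F_2]_n) (s : 'S_n) :
  (forall x, x \in X -> col_perm s x \in C) -> \dim <<X>> = \dim C ->
  code_equiv C <<X>>%VS.
Proof.
move=> sXC dimXC; pose f := linfun (col_perm s : 'rV['F_2]_n -> 'rV_n).
have fE v : f v = col_perm s v by rewrite lfunE.
have f_inj : injective f.
  by move=> u v; rewrite !fE => /(congr1 (col_perm s^-1)); rewrite -!col_permM !mulVg !col_perm1.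
have fX : (f @: <<X>> = C)%VS.
  apply/eqP; rewrite eqEdim limg_dim_eq ?dimXC ?leqnn ?andbT; last first.
    by move/lker0P/eqP: f_inj => ->; rewrite capv0.
  by rewrite limg_span; apply/span_subvP => _ /mapP [x xX ->]; rewrite fE sXC.
exists s => v; rewrite -fX -fE; apply/idP/memv_imgP => [vX | [w wX /f_inj ->] //].
by exists v.
Qed.

Definition bit (j k : nat) : bool := odd (j %/ 2 ^ k).

Lemma coord_rowE k (j : 'I_32) : coord_row k 0 j = (~~ bit j k)%:R.
Proof. by rewrite mxE. Qed.

Definition of_bits (b : nat -> bool) : 'I_32 := inord (\sum_(k < 5) b k * 2 ^ k)%N.

Lemma of_bitsE b : of_bits b = (\sum_(k < 5) b k * 2 ^ k)%N :> nat.
Proof.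
rewrite inordK // !big_ord_recl big_ord0 /=.
by move: (b 0%N) (b 1%N) (b 2%N) (b 3%N) (b 4%N); do 5 case.
Qed.

Lemma bit_of_bits b k : (k < 5)%N -> bit (of_bits b) k = b k.
Proof.
rewrite /bit of_bitsE !big_ord_recl big_ord0 /=.
case: k => [|[|[|[|[|]]]]] // _; move: (b 0%N) (b 1%N) (b 2%N) (b 3%N) (b 4%N);
  by do 5 case.
Qed.

Lemma of_bits_bit (j : 'I_32) : of_bits (bit j) = j.
Proof.
apply: val_inj; rewrite /= of_bitsE !big_ord_recl big_ord0 /=.
by case: j => j /=; do 32 case: j => [|j] //.
Qed.

Lemma bits_inj (i j : 'I_32) : (forall k, (k < 5)%N -> bit i k = bit j k) -> i = j.
Proof.
move=> eq_bits; rewrite -(of_bits_bit i) -(of_bits_bit j).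
by congr inord; apply: eq_bigr => k _; rewrite eq_bits.
Qed.

Definition rm_gens : seq 'rV['F_2]_32 :=
  [:: all_ones 32; coord_row 4; coord_row 3; coord_row 2; coord_row 1; coord_row 0].

Definition rm_gen_bit (i j : nat) : bool := if i is i'.+1 then ~~ bit j (4 - i') else true.

Lemma rm_gensE (i : 'I_6) (j : 'I_32) : rm_gens`_i 0 j = (rm_gen_bit i j)%:R.
Proof. by case: i => [[|[|[|[|[|[|]]]]]] ?] //; rewrite /= mxE. Qed.

Definition rm_word (b : 'I_6 -> bool) (j : nat) : bool :=
  \big[addb/false]_(i < 6) (b i && rm_gen_bit i j).

Lemma wt_rm_comb (a : 'I_6 -> 'F_2) :
  wt (\sum_(i < 6) a i *: rm_gens`_i) = count (rm_word (fun i => a i != 0)) (iota 0 32).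
Proof.
rewrite /wt -card_ord_count; apply: eq_card => j.
rewrite !inE summxE /rm_word -[RHS]F2_natr_neq0.
rewrite (big_morph (fun b : bool => b%:R : 'F_2) F2_addb (erefl _)).
congr (_ != 0); apply: eq_bigr => i _.
by rewrite mxE rm_gensE F2_andb -F2_of_bool.
Qed.

Lemma rm_word_wt_div4 (b : 'I_6 -> bool) : (4 %| count (rm_word b) (iota 0 32))%N.
Proof.
rewrite /rm_word; under eq_count => j do rewrite !big_ord_recl big_ord0.
repeat match goal with |- context [b ?i] => let x := fresh "x" in generalize (b i) as x end.
by clear b; do 6 case.
Qed.

Lemma rm_word_wt_neq0 (b : 'I_6 -> bool) i : b i -> count (rm_word b) (iota 0 32) != 0%N.
Proof.
move=> bi; suff : \big[orb/false]_(k < 6) b k ==> (count (rm_word b) (iota 0 32) != 0%N).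
  by rewrite (bigD1 i) //= bi.
rewrite /rm_word; under eq_count => j do rewrite !big_ord_recl big_ord0.
rewrite !big_ord_recl big_ord0.
repeat match goal with |- context [b ?i] => let x := fresh "x" in generalize (b i) as x end.
by clear; do 6 case.
Qed.

Lemma RM15_comb v : v \in RM15 -> exists a : 'I_6 -> 'F_2, v = \sum_(i < 6) a i *: rm_gens`_i.
Proof. by move=> /(coord_span (X := in_tuple rm_gens)) ->; eexists. Qed.

Lemma RM15_doubly_even : doubly_even RM15.
Proof. by move=> v /RM15_comb [a ->]; rewrite wt_rm_comb rm_word_wt_div4. Qed.

Lemma RM15_dim : \dim RM15 = 6%N.
Proof.
have /eqP // : free (in_tuple rm_gens).
apply/freeP => a comb0 i; apply/eqP/negPn/negP => ai.
by have := @rm_word_wt_neq0 (fun k => a k != 0) i ai; rewrite -wt_rm_comb comb0 wt_eq0 eqxx.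
Qed.

Lemma RM15_all_ones : all_ones 32 \in RM15.
Proof. by apply: memv_span; rewrite inE eqxx. Qed.

Lemma coord_row_RM15 k : (k < 5)%N -> coord_row k \in RM15.
Proof.
by move=> k_lt5; apply: memv_span; case: k k_lt5 => [|[|[|[|[|]]]]] //= _; rewrite !inE eqxx ?orbT.
Qed.

Lemma RM15_separates (i j : 'I_32) : i != j -> exists2 c, c \in RM15 & c 0 i != c 0 j.
Proof.
move=> ij; have /existsP [k bit_neq] : [exists k : 'I_5, bit i k != bit j k].
  apply: contraNT ij => /existsPn eq_bits; apply/eqP/bits_inj => k k_lt5.
  by have /negPn/eqP := eq_bits (Ordinal k_lt5).
exists (coord_row k); first exact: coord_row_RM15.
by rewrite !coord_rowE F2_eq_natr (inj_eq negb_inj).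
Qed.

Lemma RM15_dual : dual_min_wt_ge RM15 4.
Proof. exact: dual_min_wt4 RM15_all_ones RM15_separates. Qed.

Definition label (bs : seq 'rV['F_2]_32) (j : 'I_32) : 'I_32 :=
  of_bits (fun k => bs`_k 0 j != 0).

Lemma coord_row_label bs k j : (k < 5)%N -> coord_row k 0 (label bs j) = 1 + bs`_k 0 j.
Proof. by move=> k_lt5; rewrite coord_rowE bit_of_bits // F2_negb. Qed.

Lemma label_inj (bs : seq 'rV['F_2]_32) : size bs = 5%N ->
  dual_min_wt_ge <<all_ones 32 :: bs>>%VS 4 -> injective (label bs).
Proof.
move=> size_bs dualB i j label_ij; apply: (dual_min_wt_agree dualB isT).
apply: span_agree => x; rewrite inE => /predU1P [-> | /(nthP 0) [k k_lt <-]].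
  by rewrite !mxE.
by rewrite size_bs in k_lt; apply: (addrI 1); rewrite -!coord_row_label // label_ij.
Qed.

Lemma RM15_unique (B : code 32) :
  \dim B = 6%N -> all_ones 32 \in B -> dual_min_wt_ge B 4 -> code_equiv RM15 B.
Proof.
move=> dimB onesB dualB.
have ones_neq0 : all_ones 32 != 0.
  by apply/eqP => /matrixP /(_ 0 0); rewrite !mxE => /eqP; rewrite oner_eq0.
have [bs [size_bs BE]] := span_cons_basis onesB ones_neq0.
rewrite dimB in size_bs; rewrite {}BE in dimB dualB *.
pose s := perm (label_inj size_bs dualB).
apply: (@code_equiv_perm _ _ _ s^-1); last by rewrite dimB RM15_dim.
move=> x; rewrite inE => /predU1P [-> | /(nthP 0) [k k_lt <-]].
  suff -> : col_perm s^-1 (all_ones 32) = all_ones 32 by exact: RM15_all_ones.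
  by apply/matrixP => a j; rewrite !mxE.
rewrite size_bs in k_lt.
suff -> : col_perm s^-1 bs`_k = all_ones 32 + coord_row k.
  by rewrite memvD ?RM15_all_ones ?coord_row_RM15.
apply/matrixP => a j; rewrite [a]ord1 -[in RHS](permKV s j) permE [RHS]mxE coord_row_label //.
by rewrite [all_ones _ _ _]mxE addrA (addrr_pchar2 pchar_F2) add0r mxE.
Qed.

Theorem mainTheorem7 :
  (\dim RM15 = 6%N /\ doubly_even RM15 /\ all_ones 32 \in RM15
     /\ dual_min_wt_ge RM15 4) /\
  (forall B : code 32,
     \dim B = 6%N -> doubly_even B -> all_ones 32 \in B ->
     dual_min_wt_ge B 4 -> code_equiv RM15 B).
Proof.
split; first by split; [exact: RM15_dim | split; [exact: RM15_doubly_even | split]];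
  [exact: RM15_all_ones | exact: RM15_dual].
by move=> B dimB _ onesB dualB; exact: RM15_unique.
Qed.
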